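(* Let $P$ be a finite lattice, let $\mu:2^P\to\mathbb{R}_{\ge0}$ be additive, and let $r(f)=\mu(P\setminus\Phi f)$ for $f\in\mathcal{L}_P$. Define $\mathrm{fragility}(f)=\max\{r(w): w\in\mathcal{L}_P,\ w\le f,\ w\text{ prime}\}$. Then for all $f,g\in\mathcal{L}_P$, $\mathrm{fragility}(f+g)\le\mathrm{fragility}(f)+\mathrm{fragility}(g)$.
   Context: $P$ is a finite lattice. $\mathcal{L}_P$ is the set of maps $f:P\to P$ satisfying (A.1) $a\le f(a)$; (A.2) $a\le b\Rightarrow f(a)\le f(b)$; (A.3) $f(f(a))=f(a)$, ordered pointwise; it is a lattice with join $+$. $\Phi f=\{a:f(a)=a\}$. $f$ is prime if $P\setminus\Phi f$ is closed under $\wedge$. *)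

From HB Require Import structures.
From mathcomp Require Import all_boot all_order all_algebra.
Set Implicit Arguments. Unset Strict Implicit. Unset Printing Implicit Defensive.
Import Order.TTheory GRing.Theory Num.Theory.

Section ClosureDefs.
Context {disp : Order.disp_t} {P : finTBLatticeType disp}.

Definition is_closure (f : P -> P) : bool :=
  [&& [forall a : P, (a <= f a)%O],
      [forall a : P, forall b : P, (a <= b)%O ==> (f a <= f b)%O] &
      [forall a : P, f (f a) == f a]].

Definition le_fun (f g : P -> P) : bool := [forall a : P, (f a <= g a)%O].

Definition Phi (f : P -> P) : {set P} := [set a | f a == a].

Definition is_prime (f : P -> P) : bool :=
  [forall a : P, forall b : P,
     [&& a \notin Phi f & b \notin Phi f] ==> ((a `&` b)%O \notin Phi f)].

(* the join f + g in L_P: the closure operator whose fixed-point set is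
   Phi f :&: Phi g, i.e. (f+g)(a) = meet of all common fixed points above a *)
Definition cl_join (f g : P -> P) (a : P) : P :=
  (\meet_(x : P | (a <= x)%O && (x \in Phi f :&: Phi g)) x)%O.

Local Open Scope ring_scope.

Definition additive_measure (R : realFieldType) (mu : {set P} -> R) : Prop :=
  (forall A, 0 <= mu A) /\
  (forall A B : {set P}, [disjoint A & B] -> mu (A :|: B) = mu A + mu B).

Definition rk (R : realFieldType) (mu : {set P} -> R) (f : P -> P) : R :=
  mu (~: Phi f).

(* fragility(f) = max { r(w) : w in L_P, w <= f, w prime }.  The candidate set
   always contains the identity (with r = 0), and r >= 0, so starting the
   max at 0 does not change its value. *)
Definition fragility (R : realFieldType) (mu : {set P} -> R) (f : P -> P) : R :=
  \big[Num.max/0]_(w : {ffun P -> P} | [&& is_closure w, le_fun w f & is_prime w])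
     rk mu w.

End ClosureDefs.

From HB Require Import structures.
From mathcomp Require Import all_boot all_order all_algebra.
Import Order.TTheory GRing.Theory Num.Theory.

(* For a prime closure w <= f + g, the set N = ~: Phi w of non-fixed points of w
   is closed under meets, and no point of N is fixed by both f and g.  We split
   N into the non-fixed sets S1, S2 of prime closures below f and below g, by
   descending induction on a point t, covering the points of N above t.  If
   f t != t, the points above t but not above f t (the fringe of t) can all be
   added to S1, and the points above f t are covered by induction; likewise if
   g t != t.  If t is fixed by both, then t is not in N, and the meet of the
   points of N above t lies in N, strictly above t.  Finally
   r(w) = mu N <= mu S1 + mu S2 <= fragility f + fragility g. *)

Lemma upward_ind (disp : Order.disp_t) (T : finPOrderType disp) (Q : T -> Prop) :
  (forall t, (forall u, (t < u)%O -> Q u) -> Q t) -> forall t, Q t.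
Proof.
move=> IH t; have [n] := ubnP #|[set u | (t <= u)%O]|; elim: n t => // n IHn t.
rewrite ltnS => cardt; apply: IH => u tu; apply: IHn; apply: leq_trans cardt.
apply: proper_card; apply/properP; split.
  by apply/subsetP => y; rewrite !inE; apply: le_trans (ltW tu).
by exists t; rewrite !inE ?lexx // lt_geF.
Qed.

Section PrimeClosures.
Context {disp : Order.disp_t} {P : finTBLatticeType disp}.
Local Open Scope order_scope.
Implicit Types (f g h : P -> P) (S N : {set P}) (t x y : P).

Lemma closure_ge {f} : is_closure f -> forall x, x <= f x.
Proof. by case/and3P => /forallP. Qed.

Lemma closure_homo {f} : is_closure f -> {homo f : x y / x <= y}.
Proof. by case/and3P => _ /forallP hmono _ x y; move/forallP: (hmono x) => /(_ y)/implyP. Qed.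

Lemma closure_idem {f} : is_closure f -> forall x, f (f x) = f x.
Proof. by case/and3P => _ _ /forallP hidem x; apply/eqP. Qed.

Definition meet_closed S := forall x y, x \in S -> y \in S -> x `&` y \in S.

Lemma meet_closed_big {S} {A : {set P}} :
  meet_closed S -> A \subset S -> A != set0 -> \meet_(x in A) x \in S.
Proof.
move=> closedS AS /set0Pn [x0 Ax0].
have : \meet_(x in A) x \in S :|: [set \top].
  elim/big_ind: _ => [|a b|a Aa]; rewrite ?in_setU ?in_set1 ?eqxx ?orbT //.
    move=> /orP[aS|/eqP->] /orP[bS|/eqP->];
      by rewrite ?meetx1 ?meet1x ?aS ?bS ?eqxx ?orbT ?closedS.
  by rewrite (subsetP AS).
rewrite in_setU in_set1 => /orP[// | /eqP meet_top].
suff x0_top : x0 = \top by rewrite meet_top -x0_top (subsetP AS).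
by apply/eqP; rewrite eq_le lex1 -meet_top meets_inf.
Qed.

(* [prime_below f S] says that S is the set of non-fixed points of a prime
   closure w <= f; such a w is recovered as [hull S]. *)
Definition prime_below f S : Prop :=
  [/\ meet_closed S, meet_closed (~: S), \top \notin S & {in S, forall x, f x != x}].

Lemma prime_below0 f : prime_below f set0.
Proof. by split=> [x y|x y|//|x]; rewrite ?setC0 ?inE. Qed.

Section Hull.
Variable S : {set P}.
Hypotheses (closedCS : meet_closed (~: S)) (topS : \top \notin S).

Definition hull : {ffun P -> P} := [ffun x => \meet_(y | (x <= y) && (y \notin S)) y].

Lemma hull_ge x : x <= hull x.
Proof. by rewrite ffunE; apply/meetsP => y /andP[]. Qed.

Lemma hull_le x y : x <= y -> y \notin S -> hull x <= y.
Proof. by move=> xy yS; rewrite ffunE meets_inf ?xy. Qed.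

Lemma hull_notin x : hull x \notin S.
Proof.
rewrite -in_setC ffunE; elim/big_ind: _ => [|a b|y /andP[_]]; rewrite ?in_setC //.
by rewrite -!in_setC; apply: closedCS.
Qed.

Lemma Phi_hull : Phi hull = ~: S.
Proof.
apply/setP => x; rewrite !inE; apply/eqP/idP => [<-|xS]; first exact: hull_notin.
by apply/le_anti; rewrite hull_ge hull_le.
Qed.

Lemma hull_closure : is_closure hull.
Proof.
apply/and3P; split; apply/forallP => x; first exact: hull_ge.
  apply/forallP => y; apply/implyP => xy.
  by rewrite hull_le ?hull_notin // (le_trans xy (hull_ge y)).
by apply/eqP/le_anti; rewrite hull_ge hull_le ?hull_notin.
Qed.

Lemma hull_prime : meet_closed S -> is_prime hull.
Proof.
move=> closedS; apply/forallP => x; apply/forallP => y; apply/implyP.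
by rewrite Phi_hull !inE !negbK => /andP[]; apply: closedS.
Qed.

Lemma hull_le_fun f : is_closure f -> {in S, forall x, f x != x} -> le_fun hull f.
Proof.
move=> cf nfixS; apply/forallP => x; rewrite hull_le ?closure_ge //.
by apply/negP => /nfixS; rewrite closure_idem ?eqxx.
Qed.

End Hull.

Definition upset t : {set P} := [set x | t <= x].

Definition fringe h t : {set P} := [set x | (t <= x) && ~~ (h t <= x)].

Lemma in_upset t x : (x \in upset t) = (t <= x).
Proof. by rewrite inE. Qed.

Lemma upset_sub {t u} : t <= u -> upset u \subset upset t.
Proof. by move=> tu; apply/subsetP => x; rewrite !in_upset; apply: le_trans. Qed.

Lemma in_fringe h t x : (x \in fringe h t) = (t <= x) && ~~ (h t <= x).
Proof. by rewrite inE. Qed.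

Lemma prime_below_fringe h S t : is_closure h -> prime_below h S ->
  S \subset upset (h t) -> prime_below h (S :|: fringe h t).
Proof.
move=> ch [closedS closedCS topS nfixS] /subsetP S_up.
have t_up x : x \in S -> t <= x.
  by move=> /S_up; rewrite in_upset; apply: le_trans; apply: closure_ge.
have fringe_meet x y : t <= x -> t <= y -> ~~ (h t <= x) -> x `&` y \in fringe h t.
  by move=> tx ty htx; rewrite in_fringe !lexI tx ty negb_and htx.
split.
- move=> x y /setUP[xS|/[!in_fringe]/andP[tx htx]] /setUP[yS|/[!in_fringe]/andP[ty hty]];
    apply/setUP.
  + by left; apply: closedS.
  + by right; rewrite meetC; exact: fringe_meet ty (t_up _ xS) hty.
  + by right; exact: fringe_meet tx (t_up _ yS) htx.
  + by right; exact: fringe_meet.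
- move=> x y; rewrite !in_setC !in_setU !negb_or => /andP[xS xF] /andP[yS yF].
  have := closedCS x y; rewrite !in_setC => -> //=.
  rewrite in_fringe negb_and negbK lexI.
  move: xF yF; rewrite !in_fringe !negb_and !negbK.
  by do 2 case: (t <= _) => //=; rewrite lexI => -> ->.
- by rewrite in_setU in_fringe negb_or topS !lex1.
- move=> x; rewrite in_setU in_fringe => /orP[/nfixS // | /andP[tx htx]].
  by apply: contra htx => /eqP hx; rewrite -hx closure_homo.
Qed.

Definition covering f g N t : Prop := exists S1 S2,
  [/\ prime_below f S1, prime_below g S2,
      S1 :|: S2 \subset upset t & N :&: upset t \subset S1 :|: S2].

Lemma covering_sym f g N t : covering f g N t -> covering g f N t.
Proof. by case=> S1 [S2 [pS1 pS2]]; rewrite setUC => ? ?; exists S2, S1. Qed.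

Lemma covering_up {f g N t u} : t <= u -> N :&: upset t \subset upset u ->
  covering f g N u -> covering f g N t.
Proof.
move=> tu Nu [S1 [S2 [pS1 pS2 S_u N_S]]]; exists S1, S2; split=> //.
  exact: subset_trans S_u (upset_sub tu).
by apply: subset_trans N_S; rewrite subsetI subsetIl.
Qed.

Lemma covering_fringe {h g N t} : is_closure h ->
  covering h g N (h t) -> covering h g N t.
Proof.
move=> ch [S1 [S2 [pS1 pS2 S_ht N_S]]].
have t_ht := closure_ge ch t.
exists (S1 :|: fringe h t), S2; split=> //.
- by apply: prime_below_fringe => //; apply: subset_trans S_ht; apply: subsetUl.
- rewrite setUAC subUset (subset_trans S_ht (upset_sub t_ht)) /=.
  by apply/subsetP => x; rewrite in_fringe in_upset => /andP[].
- apply/subsetP => x /setIP[xN]; rewrite in_upset => tx.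
  case: (boolP (h t <= x)) => htx; last by rewrite !in_setU in_fringe tx htx orbT.
  have /(subsetP N_S) : x \in N :&: upset (h t) by rewrite in_setI xN in_upset.
  by rewrite !in_setU => /orP[] ->; rewrite ?orbT.
Qed.

Lemma covering_all {f g N} : is_closure f -> is_closure g -> meet_closed N ->
  {in N, forall x, (f x != x) || (g x != x)} -> forall t, covering f g N t.
Proof.
move=> cf cg closedN nfixN; apply: upward_ind => t IH.
have [ftt|nft] := eqVneq (f t) t; last first.
  by apply: (covering_fringe cf); apply: IH; rewrite lt_def nft closure_ge.
have [gtt|ngt] := eqVneq (g t) t; last first.
  apply: covering_sym; apply: (covering_fringe cg); apply: covering_sym; apply: IH.
  by rewrite lt_def ngt closure_ge.
have tN : t \notin N by apply/negP => /nfixN; rewrite ftt gtt eqxx.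
have [A0|A_ne] := eqVneq (N :&: upset t) set0.
  by exists set0, set0; rewrite A0 setU0 !sub0set; split=> //; apply: prime_below0.
pose m := \meet_(x in N :&: upset t) x.
have mN : m \in N := meet_closed_big closedN (subsetIl _ _) A_ne.
have tm : t <= m by apply/meetsP => x /setIP[_]; rewrite in_upset.
apply: (covering_up tm _ (IH m _)).
  by apply/subsetP => x Ax; rewrite in_upset meets_inf.
by rewrite lt_def tm andbT; apply: contraNneq tN => <-.
Qed.

Lemma meet_closed_nonfixed {w} : is_prime w -> meet_closed (~: Phi w).
Proof.
move=> /forallP pw x y xN yN.
by rewrite in_setC; apply: (implyP (forallP (pw x) y)); rewrite -!in_setC xN yN.
Qed.

Lemma cl_join_fixed {f g x} : f x = x -> g x = x -> cl_join f g x = x.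
Proof.
move=> fx gx; apply/le_anti; rewrite meets_inf ?lexx ?inE ?fx ?gx ?eqxx //=.
by apply/meetsP => y /andP[].
Qed.

Lemma nonfixed_below_join {f g w} : is_closure w -> le_fun w (cl_join f g) ->
  {in ~: Phi w, forall x, (f x != x) || (g x != x)}.
Proof.
move=> cw /forallP w_le x; rewrite !inE; apply: contraR.
rewrite negb_or !negbK => /andP[/eqP fx /eqP gx].
by rewrite eq_le (closure_ge cw) andbT -{2}(cl_join_fixed fx gx).
Qed.

End PrimeClosures.

Local Open Scope ring_scope.

Section Fragility.
Context {disp : Order.disp_t} {P : finTBLatticeType disp} {R : realFieldType}.
Context {mu : {set P} -> R} (mu_additive : additive_measure mu).
Implicit Types (A B : {set P}) (f : P -> P).

Lemma measure_mono {A B} : A \subset B -> mu A <= mu B.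
Proof.
have [mu_ge0 mu_add] := mu_additive.
move=> AB; rewrite -(setID B A) (setIidPr AB) mu_add ?lerDl //.
by rewrite disjoint_sym disjoints_subset subsetDr.
Qed.

Lemma measure_subadd A B : mu (A :|: B) <= mu A + mu B.
Proof.
have [_ mu_add] := mu_additive.
have -> : A :|: B = A :|: B :\: A by rewrite setDE setUIr setUCr setIT.
rewrite mu_add ?lerD2l ?measure_mono ?subsetDl //.
by rewrite disjoint_sym disjoints_subset subsetDr.
Qed.

Lemma prime_below_le_fragility {f S} :
  is_closure f -> prime_below f S -> mu S <= fragility mu f.
Proof.
move=> cf [closedS closedCS topS nfixS].
have -> : mu S = rk mu (hull S) by rewrite /rk Phi_hull // setCK.
by apply: le_bigmax_cond; rewrite hull_closure ?hull_le_fun ?hull_prime.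
Qed.

End Fragility.

Theorem mainTheorem19 (disp : Order.disp_t) (P : finTBLatticeType disp)
  (R : realFieldType) (mu : {set P} -> R) (f g : P -> P) :
  additive_measure mu -> is_closure f -> is_closure g ->
  fragility mu (cl_join f g) <= fragility mu f + fragility mu g.
Proof.
move=> hmu cf cg; apply: bigmax_le => [|w /and3P[cw w_le pw]].
  by rewrite addr_ge0 ?bigmax_ge_id.
have [S1 [S2 [pS1 pS2 _ N_S]]] := covering_all cf cg (meet_closed_nonfixed pw)
  (nonfixed_below_join cw w_le) \bot%O.
have nonfixed_S : ~: Phi w \subset S1 :|: S2.
  apply: subset_trans N_S; rewrite subsetI subxx.
  by apply/subsetP => x _; rewrite in_upset le0x.
apply: le_trans (measure_mono hmu nonfixed_S) _.
apply: le_trans (measure_subadd hmu S1 S2) _.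
by rewrite lerD ?(prime_below_le_fragility cf pS1) ?(prime_below_le_fragility cg pS2).
Qed.
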